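(* Let $\ell=2m\ge2$, $a\in\mathfrak o_\ell^\times$ with image $\bar a\in\mathfrak o_m$, let $x\in\mathfrak g(\mathfrak o_m)$ be an $\bar a$-regular element, and let $\tilde x\in\mathfrak g(\mathfrak o_\ell)$ be any lift of $x$. Then (1) $\mathbf U(\mathfrak o_\ell)\cap C_{\mathbf G(\mathfrak o_\ell)}(\tilde x)K_\ell^m=\mathbf U(\varpi^m\mathfrak o_\ell)$; (2) the character $\varphi_x$ of $K_\ell^m$ agrees with $\theta_a$ on $\mathbf U(\varpi^m\mathfrak o_\ell)$, so that for any character $\widetilde{\varphi_x}$ of $C_{\mathbf G(\mathfrak o_\ell)}(\tilde x)K_\ell^m$ extending $\varphi_x$, $\mathrm{Hom}_{\mathbf U(\varpi^m\mathfrak o_\ell)}(\widetilde{\varphi_x},\theta_a)\ne0$.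
   Context: $\mathfrak o$: ring of integers of a non-archimedean local field, uniformizer $\varpi$, residue field $\mathbb F_q$ of characteristic $p$; $\mathfrak o_r=\mathfrak o/\varpi^r\mathfrak o$. Either $\mathbf G={\rm GL}_n$, $\mathfrak g=M_n$, or $\mathbf G={\rm SL}_n$, $\mathfrak g=\mathfrak{sl}_n$ with $p$ odd, $p\nmid n$. $\mathbf U(\mathfrak o_\ell)$: upper unitriangular matrices; $\mathbf U(\varpi^k\mathfrak o_\ell)$: those whose strictly upper triangular entries lie in $\varpi^k\mathfrak o_\ell$. $K_\ell^m=\ker(\mathbf G(\mathfrak o_\ell)\to\mathbf G(\mathfrak o_m))$. Fix a primitive character $\varphi$ of $(\mathfrak o_\ell,+)$ (nontrivial on $\varpi^{\ell-1}\mathfrak o_\ell$); $\varphi_x(I+\varpi^my)=\varphi(\varpi^m\mathrm{tr}(\hat xy))$ for $I+\varpi^my\in K_\ell^m$, $\hat x$ any lift of $x$; $\theta_a((u_{ij}))=\varphi(au_{12}+u_{23}+\dots+u_{n-1,n})$. For $\alpha\in\mathfrak o_m^\times$ an $\alpha$-regular element of $\mathfrak g(\mathfrak o_m)$ is a matrix with $(2,1)$ entry $\alpha$, $(i+1,i)$ entries $1$ for $2\le i\le n-1$, arbitrary last column, other entries $0$. $C_{\mathbf G(\mathfrak o_\ell)}(\tilde x)$ is the centralizer of $\tilde x$ in $\mathbf G(\mathfrak o_\ell)$. *)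

From HB Require Import structures.
From mathcomp Require Import all_boot all_order all_algebra all_fingroup all_field.
Set Implicit Arguments. Unset Strict Implicit. Unset Printing Implicit Defensive.
Import GRing.Theory.
Local Open Scope ring_scope.

(* The ring o_l = o / varpi^l o is modelled as a finite commutative ring R
   together with an element varpi such that R is local with maximal ideal
   varpi R, varpi^l = 0 and varpi^(l-1) <> 0 (a finite chain ring of length l;
   these are exactly the rings o/varpi^l o). *)
Definition chain_ring (R : finComUnitRingType) (varpi : R) (l : nat) : Prop :=
  [/\ forall y : R, y \isn't a GRing.unit -> exists r : R, y = varpi * r,
      varpi ^+ l = 0 & varpi ^+ l.-1 != 0].

Definition inIdeal (R : finComUnitRingType) (varpi : R) (k : nat) (y : R) : bool :=
  [exists r : R, y == varpi ^+ k * r].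

Definition congr_mod (R : finComUnitRingType) (varpi : R) (k : nat) (y z : R) : bool :=
  inIdeal varpi k (y - z).

(* The two cases G = GL_n (g = M_n) and G = SL_n (g = sl_n). *)
Inductive Gkind := GLk | SLk.

Section Defs.
Variables (R : finComUnitRingType) (n : nat).
Local Notation N := n.-1.+1.
Local Notation GT := {'GL_n[R]}.

Definition Gset (k : Gkind) : {set GT} :=
  match k with
  | GLk => [set: GT]
  | SLk => [set g : GT | \det (GLval g) == 1]
  end.

Definition in_lie (k : Gkind) (x : 'M[R]_N) : bool :=
  match k with GLk => true | SLk => \tr x == 0 end.

Definition Cent (k : Gkind) (x : 'M[R]_N) : {set GT} :=
  [set g in Gset k | GLval g *m x == x *m GLval g].

Definition Kset (k : Gkind) (varpi : R) (m : nat) : {set GT} :=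
  [set g in Gset k | [forall i, forall j,
     inIdeal varpi m (GLval g i j - (i == j)%:R)]].

Definition Uset : {set GT} :=
  [set g : GT | [forall i : 'I_N, forall j : 'I_N,
     ((j < i)%N ==> (GLval g i j == 0)) && ((i == j) ==> (GLval g i j == 1))]].

Definition Uk (varpi : R) (k : nat) : {set GT} :=
  [set g in Uset | [forall i : 'I_N, forall j : 'I_N,
     (i < j)%N ==> inIdeal varpi k (GLval g i j)]].

(* x (in M_n(o_l)) reduces mod varpi^m to an (a mod varpi^m)-regular element:
   (2,1) entry = a, (i+1,i) entries = 1 for 2 <= i <= n-1, arbitrary last
   column, all other entries 0 (indices here are 0-based). *)
Definition regular_mod (varpi : R) (m : nat) (a : R) (x : 'M[R]_N) : bool :=
  [forall i : 'I_N, forall j : 'I_N, (j.+1 < N)%N ==>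
     congr_mod varpi m (x i j)
       (if i == j.+1 :> nat then (if j == 0 :> nat then a else 1) else 0)].

(* phi_x(I + varpi^m y) = phi(varpi^m tr(x y)) = phi(tr(x (g - 1))) *)
Definition phi_x (phi : R -> algC) (x : 'M[R]_N) (g : GT) : algC :=
  phi (\tr (x *m (GLval g - 1%:M))).

Definition theta (phi : R -> algC) (a : R) (g : GT) : algC :=
  phi (a * GLval g (inord 0) (inord 1) +
       \sum_(1 <= i < n.-1) GLval g (inord i) (inord i.+1)).

Definition lin_char_on (A : {set GT}) (psi : GT -> algC) : Prop :=
  (forall g h, g \in A -> h \in A -> psi (g * h)%g = psi g * psi h) /\
  (forall g, g \in A -> psi g != 0).

End Defs.

Definition add_char (R : finComUnitRingType) (phi : R -> algC) : Prop :=
  phi 0 = 1 /\ forall y z, phi (y + z) = phi y * phi z.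

Definition primitive_char (R : finComUnitRingType) (varpi : R) (l : nat)
  (phi : R -> algC) : Prop :=
  exists y : R, inIdeal varpi l.-1 y /\ phi y != 1.

From HB Require Import structures.
From mathcomp Require Import all_boot all_order all_algebra all_fingroup all_field.
Set Implicit Arguments. Unset Strict Implicit. Unset Printing Implicit Defensive.
Import GRing.Theory.
Local Open Scope ring_scope.

(* Write P for the ideal varpi^m o_l; since varpi^(2m) = 0, P * P = 0.
   Modulo P, the matrix x agrees with its "regular model" E, which has the
   subdiagonal a, 1, ..., 1, the last column of x and zeros elsewhere.

   (1) U(varpi^m) lies in K_l^m, hence in C(x) K_l^m.  Conversely, an element
       g = c k of C(x) K_l^m commutes with x modulo P (c commutes with x and
       k = 1 mod P), hence with E.  If g is moreover upper unitriangular,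
       comparing the entries of g E and E g outside the last column gives the
       recurrence g_(i,j+1) s_j = s_(i-1) g_(i-1,j) mod P, with s_j the unit
       subdiagonal coefficients of E; induction on the row i puts every
       strictly upper entry of g in P, i.e. g is in U(varpi^m).
   (2) For u in U(varpi^m), u - 1 has entries in P, so P * P = 0 lets us
       replace x by E in tr(x (u - 1)), which gives a u_12 + sum u_(i,i+1).
       Thus phi_x = theta_a on U(varpi^m).
   (3) Any extension psi of phi_x agrees with theta_a on U(varpi^m) by (2),
       so the identity (c = 1) is a nonzero intertwiner. *)

Section IdealArithmetic.
Variables (R : finComUnitRingType) (varpi : R).

Lemma ideal0 k : inIdeal varpi k 0.
Proof. by apply/existsP; exists 0; rewrite mulr0. Qed.

Lemma idealD k y z : inIdeal varpi k y -> inIdeal varpi k z -> inIdeal varpi k (y + z).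
Proof.
move=> /existsP[r /eqP->] /existsP[s /eqP->].
by apply/existsP; exists (r + s); rewrite mulrDr.
Qed.

Lemma idealN k y : inIdeal varpi k y -> inIdeal varpi k (- y).
Proof. by move=> /existsP[r /eqP->]; apply/existsP; exists (- r); rewrite mulrN. Qed.

Lemma idealB k y z : inIdeal varpi k y -> inIdeal varpi k z -> inIdeal varpi k (y - z).
Proof. by move=> Iy Iz; apply/idealD/idealN. Qed.

Lemma idealMl k r y : inIdeal varpi k y -> inIdeal varpi k (r * y).
Proof. by move=> /existsP[s /eqP->]; apply/existsP; exists (r * s); rewrite mulrCA. Qed.

Lemma idealMr k r y : inIdeal varpi k y -> inIdeal varpi k (y * r).
Proof. by rewrite mulrC; apply: idealMl. Qed.

Lemma ideal_sum k (I : finType) (F : I -> R) :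
  (forall i, inIdeal varpi k (F i)) -> inIdeal varpi k (\sum_i F i).
Proof.
by move=> IF; apply: (big_ind (inIdeal varpi k)) => //; [apply: ideal0 | apply: idealD].
Qed.

Lemma ideal_unitMl k s y :
  s \is a GRing.unit -> inIdeal varpi k (s * y) -> inIdeal varpi k y.
Proof. by move=> s_unit; rewrite -{2}(mulKr s_unit y); apply: idealMl. Qed.

(* varpi^k R * varpi^l R = 0 once varpi^(k+l) = 0; with k = l = m this is
   how the hypothesis varpi^(2m) = 0 enters. *)
Lemma ideal_mul_eq0 k l y z : varpi ^+ (k + l) = 0 ->
  inIdeal varpi k y -> inIdeal varpi l z -> y * z = 0.
Proof.
move=> vanish /existsP[r /eqP->] /existsP[s /eqP->].
by rewrite mulrACA -exprD vanish mul0r.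
Qed.

Definition mx_in_ideal k {p q} (M : 'M[R]_(p, q)) : Prop :=
  forall i j, inIdeal varpi k (M i j).

Lemma mx_ideal_mull k p q r (A : 'M[R]_(p, q)) (M : 'M[R]_(q, r)) :
  mx_in_ideal k M -> mx_in_ideal k (A *m M).
Proof. by move=> IM i j; rewrite mxE; apply: ideal_sum => l; apply: idealMl. Qed.

Lemma mx_ideal_mulr k p q r (M : 'M[R]_(p, q)) (A : 'M[R]_(q, r)) :
  mx_in_ideal k M -> mx_in_ideal k (M *m A).
Proof. by move=> IM i j; rewrite mxE; apply: ideal_sum => l; apply: idealMr. Qed.

Lemma mx_idealB k p q (A B : 'M[R]_(p, q)) :
  mx_in_ideal k A -> mx_in_ideal k B -> mx_in_ideal k (A - B).
Proof. by move=> IA IB i j; rewrite !mxE; apply: idealB. Qed.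

Lemma commutator_congr k p (u A B : 'M[R]_p) : mx_in_ideal k (A - B) ->
  mx_in_ideal k (u *m A - A *m u) -> mx_in_ideal k (u *m B - B *m u).
Proof.
move=> IAB IuA.
have -> : u *m B - B *m u = (u *m A - A *m u) - (u *m (A - B) - (A - B) *m u).
  rewrite mulmxBr mulmxBl !opprB -[A *m u - _ + _]addrA subrKA.
  by rewrite addrCA addrC [u *m A + _]addrC subrK.
by apply: mx_idealB => //; apply: mx_idealB; [apply: mx_ideal_mull | apply: mx_ideal_mulr].
Qed.

Lemma near_identity_commutator k p (K x : 'M[R]_p) :
  mx_in_ideal k (K - 1%:M) -> mx_in_ideal k (K *m x - x *m K).
Proof.
move=> IK; have -> : K *m x - x *m K = (K - 1%:M) *m x - x *m (K - 1%:M).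
  by rewrite mulmxBl mulmxBr mul1mx mulmx1 opprB addrA subrK.
by apply: mx_idealB; [apply: mx_ideal_mulr | apply: mx_ideal_mull].
Qed.

End IdealArithmetic.

Section IndexSums.
Variables (V : nmodType) (p' : nat).
Local Notation p := p'.+1.

Lemma sum_at_index (F : 'I_p -> V) (j : nat) : (j < p)%N ->
  \sum_(k : 'I_p) (if k == j :> nat then F k else 0) = F (inord j).
Proof.
move=> lt_jp; rewrite -big_mkcond /=; apply: big_pred1 => k /=.
by rewrite -(inj_eq val_inj) /= inordK.
Qed.

Lemma sum_at_pred_index (G : nat -> 'I_p -> V) (i : 'I_p) :
  \sum_(k : 'I_p) (if i == k.+1 :> nat then G k k else 0) =
  if (0 < i)%N then G i.-1 (inord i.-1) else 0.
Proof.
case: i => [[|i'] lt_ip] /=; first by apply: big1.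
have lt_i'p := ltnW lt_ip.
transitivity ((fun k : 'I_p => G k k) (inord i')); last by rewrite /= inordK.
rewrite -(sum_at_index (fun k : 'I_p => G k k) lt_i'p).
by apply: eq_bigr => k _; rewrite eqSS eq_sym.
Qed.

End IndexSums.

Definition upper_mx (R : nmodType) p (u : 'M[R]_p) : Prop :=
  forall i j : 'I_p, (j < i)%N -> u i j = 0.

Section RegularElement.
Variables (R : finComUnitRingType) (varpi : R) (m p' : nat) (a : R).
Local Notation p := p'.+1.
Local Notation P := (inIdeal varpi m).

Definition sub_coef (j : nat) : R := if j == 0%N then a else 1.
Definition reg_entry (i j : nat) : R := if i == j.+1 then sub_coef j else 0.

Lemma sub_coef_unit j : a \is a GRing.unit -> sub_coef j \is a GRing.unit.
Proof. by move=> a_unit; rewrite /sub_coef; case: ifP => // _; apply: unitr1. Qed.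

Variable x : 'M[R]_p.
Hypothesis x_reg : forall i j : 'I_p, (j.+1 < p)%N -> P (x i j - reg_entry i j).

Definition reg_model : 'M[R]_p :=
  \matrix_(i, j) if (j.+1 < p)%N then reg_entry i j else x i j.

Lemma reg_model_congr : mx_in_ideal varpi m (x - reg_model).
Proof.
move=> i j; rewrite !mxE; case: ifP => [/x_reg // | _].
by rewrite subrr; apply: ideal0.
Qed.

Lemma mul_reg_model_entry (u : 'M[R]_p) (i j : 'I_p) : (j.+1 < p)%N ->
  (u *m reg_model) i j = u i (inord j.+1) * sub_coef j.
Proof.
move=> lt_j1p; rewrite mxE -(sum_at_index (fun k => u i k * sub_coef j) lt_j1p).
apply: eq_bigr => k _; rewrite mxE lt_j1p /reg_entry.
by case: ifP => _; rewrite ?mulr0.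
Qed.

(* Left multiplication by E shifts rows down, outside the last column; this
   needs u upper triangular to discard the last column of E. *)
Lemma reg_model_mul_entry (u : 'M[R]_p) (i j : 'I_p) :
  upper_mx u -> (j.+1 < p)%N ->
  (reg_model *m u) i j = if (0 < i)%N then sub_coef i.-1 * u (inord i.-1) j else 0.
Proof.
move=> u_upper lt_j1p; rewrite mxE -(sum_at_pred_index (fun k' k => sub_coef k' * u k j)).
apply: eq_bigr => k _; rewrite mxE; case: ifP => [_ | k_last].
  by rewrite /reg_entry; case: ifP; rewrite ?mul0r.
have k_eq : (k : nat) = p' by apply/eqP; rewrite eqn_leq -ltnS ltn_ord leqNgt -ltnS k_last.
rewrite u_upper ?mulr0; last by rewrite k_eq -ltnS.
by case: eqP => // i_eq; have := ltn_ord i; rewrite i_eq k_eq ltnn.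
Qed.

Lemma commutator_recurrence (u : 'M[R]_p) (i j : 'I_p) :
  upper_mx u -> mx_in_ideal varpi m (u *m x - x *m u) -> (0 < j)%N ->
  P (u i j * sub_coef j.-1 -
     (if (0 < i)%N then sub_coef i.-1 * u (inord i.-1) (inord j.-1) else 0)).
Proof.
move=> u_upper comm_x j_gt0.
have lt_jp : (j.-1.+1 < p)%N by rewrite prednK.
have j_eq : inord j.-1.+1 = j by apply/val_inj; rewrite /= prednK // inordK.
have lt_j'p : (j.-1 < p)%N := leq_ltn_trans (leq_pred j) (ltn_ord j).
have := commutator_congr reg_model_congr comm_x i (inord j.-1).
rewrite mxE [X in P (_ + X)]mxE mul_reg_model_entry ?reg_model_mul_entry ?inordK //.
by rewrite j_eq.
Qed.

(* Part (1), the key step: an upper triangular matrix commuting with x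
   modulo P has its strictly upper entries in P (induction on the row,
   dividing by the unit subdiagonal coefficients). *)
Lemma centralizer_mod_upper (u : 'M[R]_p) :
  a \is a GRing.unit -> upper_mx u -> mx_in_ideal varpi m (u *m x - x *m u) ->
  forall i j : 'I_p, (i < j)%N -> P (u i j).
Proof.
move=> a_unit u_upper comm_x.
suff by_row d (i j : 'I_p) : (i : nat) = d -> (i < j)%N -> P (u i j).
  by move=> i j; apply: by_row.
elim: d i j => [|d IHd] i j i_eq lt_ij.
  have := commutator_recurrence i u_upper comm_x (leq_ltn_trans (leq0n i) lt_ij).
  rewrite i_eq subr0 mulrC; apply: ideal_unitMl; exact: sub_coef_unit.
have j_gt0 : (0 < j)%N by apply: leq_ltn_trans lt_ij.
have lt_dp : (d < p)%N by rewrite -i_eq ltnW.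
have prev_entry : P (u (inord d) (inord j.-1)).
  have lt_j'p : (j.-1 < p)%N := leq_ltn_trans (leq_pred j) (ltn_ord j).
  by apply: IHd; rewrite ?inordK // -ltnS prednK // -i_eq.
have := idealD (commutator_recurrence i u_upper comm_x j_gt0) (idealMl (sub_coef d) prev_entry).
rewrite i_eq /= subrK mulrC; apply: ideal_unitMl; exact: sub_coef_unit.
Qed.

(* For v strictly upper triangular with entries in P, P * P = 0 lets us
   replace x by its normal form on the diagonal of x v. *)
Lemma regular_strict_upper_diag (v : 'M[R]_p) (i : 'I_p) :
  varpi ^+ (m + m) = 0 -> (forall k l : 'I_p, (l <= k)%N -> v k l = 0) ->
  mx_in_ideal varpi m v ->
  (x *m v) i i = if (0 < i)%N then sub_coef i.-1 * v (inord i.-1) i else 0.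
Proof.
move=> vanish v_strict v_ideal.
rewrite mxE -(sum_at_pred_index (fun k' k => sub_coef k' * v k i)).
apply: eq_bigr => k _; have [lt_ki | le_ik] := ltnP k i; last first.
  by rewrite v_strict // !mulr0 if_same.
have lt_k1p : (k.+1 < p)%N := leq_ltn_trans lt_ki (ltn_ord i).
rewrite -(subrK (reg_entry i k) (x i k)) mulrDl.
rewrite (ideal_mul_eq0 vanish (x_reg i lt_k1p) (v_ideal k i)) add0r /reg_entry.
by case: ifP; rewrite ?mul0r.
Qed.

Lemma trace_regular_unipotent (u : 'M[R]_p) :
  varpi ^+ (m + m) = 0 -> (0 < p')%N ->
  upper_mx u -> (forall i, u i i = 1) -> (forall i j : 'I_p, (i < j)%N -> P (u i j)) ->
  \tr (x *m (u - 1%:M)) =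
    a * u (inord 0) (inord 1) + \sum_(1 <= i < p') u (inord i) (inord i.+1).
Proof.
move=> vanish p'_gt0 u_upper u_diag u_ideal.
have above_diag (k l : 'I_p) : (k < l)%N -> (u - 1%:M) k l = u k l.
  by move=> lt_kl; rewrite !mxE -(inj_eq val_inj) /= (ltn_eqF lt_kl) subr0.
have v_strict (k l : 'I_p) : (l <= k)%N -> (u - 1%:M) k l = 0.
  rewrite leq_eqVlt => /predU1P[/val_inj-> | lt_lk]; first by rewrite !mxE eqxx u_diag subrr.
  by rewrite !mxE -(inj_eq val_inj) /= (gtn_eqF lt_lk) u_upper // subrr.
have v_ideal : mx_in_ideal varpi m (u - 1%:M).
  move=> k l; have [lt_kl | le_lk] := ltnP k l.
    by rewrite above_diag //; apply: u_ideal.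
  by rewrite v_strict //; apply: ideal0.
pose f (i : nat) := if (0 < i)%N then sub_coef i.-1 * u (inord i.-1) (inord i) else 0.
have diag_f (i : 'I_p) : (x *m (u - 1%:M)) i i = f i.
  rewrite regular_strict_upper_diag // /f inord_val; case: ifP => // i_gt0.
  by rewrite above_diag // inordK ?prednK // ltnW.
rewrite /mxtrace (eq_bigr _ (fun i _ => diag_f i)) -(big_mkord xpredT f).
rewrite big_ltn // big_ltn ?ltnS // big_add1 /f /= add0r.
congr (_ + _); apply: eq_big_nat => i /andP[i_gt0 _].
by rewrite /sub_coef eqn0Ngt i_gt0 mul1r.
Qed.

End RegularElement.

Section CongruenceSubgroups.
Variables (R : finComUnitRingType) (varpi : R) (m n : nat).
Local Notation N := n.-1.+1.
Local Notation GT := {'GL_n[R]}.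
Local Notation P := (inIdeal varpi m).

Lemma regular_modP (a : R) (x : 'M[R]_N) : regular_mod varpi m a x ->
  forall i j : 'I_N, (j.+1 < N)%N -> P (x i j - reg_entry a i j).
Proof. by move=> /forallP x_reg i j; move: (x_reg i) => /forallP /(_ j) /implyP. Qed.

Lemma Uset_upper (g : GT) : g \in Uset R n -> upper_mx (GLval g).
Proof.
rewrite inE => /forallP g_unip i j lt_ji.
by move: (g_unip i) => /forallP /(_ j) /andP[/implyP/(_ lt_ji)/eqP].
Qed.

Lemma Uk_entries (u : GT) : u \in Uk n varpi m ->
  [/\ upper_mx (GLval u), forall i, GLval u i i = 1 &
      forall i j : 'I_N, (i < j)%N -> P (GLval u i j)].
Proof.
rewrite inE => /andP[u_unip /forallP u_ideal]; split; first exact: Uset_upper.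
- move=> i; move: u_unip; rewrite inE => /forallP /(_ i) /forallP /(_ i) /andP[_].
  by rewrite eqxx => /eqP.
- by move=> i j lt_ij; move: (u_ideal i) => /forallP /(_ j) /implyP; apply.
Qed.

Lemma Uk_sub_K (k : Gkind) : {subset Uk n varpi m <= Kset n k varpi m}.
Proof.
move=> u /Uk_entries[u_upper u_diag u_ideal]; rewrite inE; apply/andP; split.
  case: k => //; rewrite inE -det_tr det_trig.
    by rewrite big1 // => i _; rewrite mxE u_diag.
  by apply/is_trig_mxP => i j lt_ij; rewrite mxE u_upper.
apply/forallP => i; apply/forallP => j; case: (ltngtP i j) => [lt_ij | lt_ji | /val_inj->].
- by rewrite -(inj_eq val_inj) /= (ltn_eqF lt_ij) subr0; apply: u_ideal.
- by rewrite u_upper // -(inj_eq val_inj) /= (gtn_eqF lt_ji) subrr; apply: ideal0.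
- by rewrite eqxx u_diag subrr; apply: ideal0.
Qed.

Lemma Cent_one (k : Gkind) (x : 'M[R]_N) : (1%g : GT) \in Cent k x.
Proof.
rewrite inE GL_1E mul1mx mulmx1 eqxx andbT.
by case: k => //; rewrite inE GL_1E det1.
Qed.

Lemma Uk_sub_CK (k : Gkind) (x : 'M[R]_N) :
  {subset Uk n varpi m <= (Cent k x * Kset n k varpi m)%g}.
Proof. by move=> u u_Uk; rewrite -(mul1g u) mem_mulg ?Cent_one ?Uk_sub_K. Qed.

Lemma CK_commutator (k : Gkind) (x : 'M[R]_N) (g : GT) :
  g \in (Cent k x * Kset n k varpi m)%g -> mx_in_ideal varpi m (GLval g *m x - x *m GLval g).
Proof.
case/mulsgP => c K; rewrite !inE => /andP[_ /eqP c_comm] /andP[_ /forallP K_near1] ->.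
have K_ideal : mx_in_ideal varpi m (GLval K - 1%:M).
  by move=> i j; move: (K_near1 i) => /forallP /(_ j); rewrite !mxE.
rewrite GL_MxE mulmxA -c_comm -!mulmxA -mulmxBr.
by apply: mx_ideal_mull; apply: near_identity_commutator.
Qed.

Lemma U_cap_CK (k : Gkind) (a : R) (x : 'M[R]_N) : a \is a GRing.unit ->
  (forall i j : 'I_N, (j.+1 < N)%N -> P (x i j - reg_entry a i j)) ->
  Uset R n :&: (Cent k x * Kset n k varpi m)%g = Uk n varpi m.
Proof.
move=> a_unit x_reg; apply/setP => g; rewrite inE.
apply/idP/idP => [/andP[g_U g_CK] | g_Uk]; last first.
  by rewrite Uk_sub_CK // andbT; move: g_Uk; rewrite inE => /andP[].
rewrite inE g_U; apply/forallP => i; apply/forallP => j; apply/implyP.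
exact: (centralizer_mod_upper x_reg a_unit (Uset_upper g_U) (CK_commutator g_CK)).
Qed.

Lemma phi_x_theta (phi : R -> algC) (a : R) (x : 'M[R]_N) :
  varpi ^+ (m + m) = 0 -> (2 <= n)%N ->
  (forall i j : 'I_N, (j.+1 < N)%N -> P (x i j - reg_entry a i j)) ->
  forall u, u \in Uk n varpi m -> phi_x phi x u = theta phi a u.
Proof.
move=> vanish n_ge2 x_reg u /Uk_entries[u_upper u_diag u_ideal].
by rewrite /phi_x /theta (trace_regular_unipotent x_reg) // -subn1 subn_gt0.
Qed.

End CongruenceSubgroups.

(* Only a unit, n >= 2, varpi^(2m) = 0 and the regularity of x are used.
   Part (3) follows from part (2) with the intertwiner c = 1. *)
Theorem lemma4p3 (R : finComUnitRingType) (varpi : R) (m n : nat) (k : Gkind)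
  (phi : R -> algC) (a : R) (x : 'M[R]_n.-1.+1) :
  (0 < m)%N -> (2 <= n)%N ->
  chain_ring varpi (2 * m) ->
  (k = SLk -> (2%:R : R) \is a GRing.unit /\ (n%:R : R) \is a GRing.unit) ->
  add_char phi -> primitive_char varpi (2 * m) phi ->
  a \is a GRing.unit ->
  in_lie k x -> regular_mod varpi m a x ->
  [/\ (Uset R n :&: (Cent k x * Kset n k varpi m)%g = Uk n varpi m),
      (forall u, u \in Uk n varpi m -> phi_x phi x u = theta phi a u) &
      (forall psi : {'GL_n[R]} -> algC,
         lin_char_on (Cent k x * Kset n k varpi m)%g psi ->
         (forall g, g \in Kset n k varpi m -> psi g = phi_x phi x g) ->
         exists2 c : algC, c != 0 &
           forall u, u \in Uk n varpi m -> c * psi u = theta phi a u * c)].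
Proof.
move=> _ n_ge2 [_ vanish _] _ _ _ a_unit _ /regular_modP x_reg.
have vanish_mm : varpi ^+ (m + m) = 0 by rewrite addnn -mul2n.
have phi_x_eq_theta := phi_x_theta phi vanish_mm n_ge2 x_reg.
split; [exact: U_cap_CK a_unit x_reg | exact: phi_x_eq_theta |].
move=> psi _ psi_ext; exists 1; first exact: oner_neq0.
by move=> u u_Uk; rewrite mul1r mulr1 psi_ext ?phi_x_eq_theta ?Uk_sub_K.
Qed.
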